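(* Let $X$ be a topological space with topology $\tau$ and let $\hat X$ denote the set $X$ with the semi-regularization topology $\hat\tau$. If $X$ is strongly $\Theta$-discrete homogeneous, then $\hat X$ is also strongly $\Theta$-discrete homogeneous.
   Context: An open set $O$ is regular open if it equals the interior of its closure. The semi-regularization $\hat\tau$ of $\tau$ is the topology on $X$ generated by the base of all regular open subsets of $(X,\tau)$; $\hat X$ is Hausdorff iff $X$ is. A subset $D$ of a space $Y$ is $\Theta$-discrete if each point $y\in Y$ has a neighbourhood whose closure contains at most one point of $D$. A Hausdorff space $Y$ is strongly $\Theta$-discrete homogeneous (s$\Theta$-DH) if for any two $\Theta$-discrete subsets $A,B$ of $Y$ and any bijection $f\colon A\to B$, $f$ extends to a homeomorphism of $Y$ onto itself. *)

(* a topology on a carrier T is given as the family of its open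
   sets, so that two topologies (tau and its semi-regularization) can live on
   the same carrier. *)
Set Implicit Arguments.

Definition set (T : Type) := T -> Prop.

Section Topo.
Variable T : Type.
Variable tau : set T -> Prop.

Definition is_topology : Prop :=
  tau (fun _ => True) /\
  (forall F : set T -> Prop, (forall U, F U -> tau U) ->
     tau (fun x => exists U, F U /\ U x)) /\
  (forall U V, tau U -> tau V -> tau (fun x => U x /\ V x)).

Definition interior (A : set T) : set T :=
  fun x => exists U, tau U /\ U x /\ (forall y, U y -> A y).

Definition closure (A : set T) : set T :=
  fun x => forall U, tau U -> U x -> exists y, U y /\ A y.

Definition regular_open (O : set T) : Prop :=
  tau O /\ (forall x, O x <-> interior (closure O) x).

Definition nbhd (y : T) (N : set T) : Prop :=
  exists U, tau U /\ U y /\ (forall z, U z -> N z).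

Definition hausdorff : Prop :=
  forall x y, x <> y -> exists U V, tau U /\ tau V /\ U x /\ V y /\
    (forall z, ~ (U z /\ V z)).

Definition theta_discrete (D : set T) : Prop :=
  forall y, exists N, nbhd y N /\
    (forall a b, D a -> D b -> closure N a -> closure N b -> a = b).

Definition continuous (h : T -> T) : Prop :=
  forall U, tau U -> tau (fun x => U (h x)).

Definition homeomorphism (h : T -> T) : Prop :=
  exists g : T -> T, (forall x, g (h x) = x) /\ (forall y, h (g y) = y) /\
    continuous h /\ continuous g.

Definition bij_on (f : T -> T) (A B : set T) : Prop :=
  (forall x, A x -> B (f x)) /\
  (forall x y, A x -> A y -> f x = f y -> x = y) /\
  (forall y, B y -> exists x, A x /\ f x = y).

Definition strongly_theta_DH : Prop :=
  hausdorff /\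
  forall (A B : set T) (f : T -> T), theta_discrete A -> theta_discrete B ->
    bij_on f A B ->
    exists h, homeomorphism h /\ (forall x, A x -> h x = f x).
End Topo.

Definition semireg (T : Type) (tau : set T -> Prop) : set T -> Prop :=
  fun U => forall x, U x -> exists R, regular_open tau R /\ R x /\
                                      (forall y, R y -> U y).

From Stdlib Require Import FunctionalExtensionality PropExtensionality.

(* The semi-regular topology is coarser than [tau].  Hence a neighbourhood in
   it is a [tau]-neighbourhood with a larger closure, so every Θ-discrete set
   of the semi-regularization is Θ-discrete for [tau].  A [tau]-homeomorphism
   commutes with interior and closure, so it permutes the regular open sets
   and is a homeomorphism of the semi-regularization as well.  Finally,
   disjoint open sets [U], [V] have disjoint regular open hulls
   [int (cl U)], [int (cl V)], so Hausdorffness survives. *)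

Section FinerTopology.
Variables (T : Type) (sigma tau : set T -> Prop).
Hypothesis sigma_sub_tau : forall U, sigma U -> tau U.

Lemma nbhd_finer (y : T) (N : set T) : nbhd sigma y N -> nbhd tau y N.
Proof. intros [U [HU HUN]]. exists U; auto. Qed.

Lemma closure_finer (A : set T) (x : T) : closure tau A x -> closure sigma A x.
Proof. intros Hx U HU. apply Hx; auto. Qed.

Lemma theta_discrete_finer (D : set T) :
  theta_discrete sigma D -> theta_discrete tau D.
Proof.
  intros HD y. destruct (HD y) as [N [HN Hd]].
  exists N. split; [apply nbhd_finer; exact HN|].
  intros a b Da Db Ca Cb.
  apply Hd; [exact Da | exact Db | apply closure_finer; exact Ca
            | apply closure_finer; exact Cb].
Qed.
End FinerTopology.

Section Topology.
Variables (T : Type) (tau : set T -> Prop).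
Hypothesis top : is_topology tau.

Lemma open_ext (A B : set T) : (forall x, A x <-> B x) -> tau A -> tau B.
Proof.
  intros HAB HA. replace B with A; [exact HA|].
  apply functional_extensionality; intro x; apply propositional_extensionality; auto.
Qed.

Lemma open_interior (A : set T) : tau (interior tau A).
Proof.
  destruct top as [_ [open_union _]].
  apply open_ext with
    (A := fun x => exists U, (tau U /\ forall y, U y -> A y) /\ U x).
  - intro x; split.
    + intros [U [[HU HUA] Ux]]. exists U; auto.
    + intros [U [HU [Ux HUA]]]. exists U; auto.
  - apply open_union. intros U [HU _]; exact HU.
Qed.

Lemma interior_mono (A B : set T) : (forall x, A x -> B x) ->
  forall x, interior tau A x -> interior tau B x.
Proof. intros HAB x [U [HU [Ux HUA]]]. exists U; auto. Qed.

Lemma closure_sub_closure (A B : set T) : (forall x, A x -> closure tau B x) ->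
  forall x, closure tau A x -> closure tau B x.
Proof.
  intros HAB x Hx U HU Ux. destruct (Hx U HU Ux) as [y [Uy Ay]].
  exact (HAB y Ay U HU Uy).
Qed.

Lemma open_sub_interior_closure (U : set T) : tau U ->
  forall x, U x -> interior tau (closure tau U) x.
Proof.
  intros HU x Ux. exists U. repeat split; auto.
  intros y Uy V _ Vy. exists y; auto.
Qed.

Lemma regular_open_interior_closure (A : set T) :
  regular_open tau (interior tau (closure tau A)).
Proof.
  split; [apply open_interior|]. intro x; split.
  - apply open_sub_interior_closure, open_interior.
  - apply interior_mono, closure_sub_closure.
    intros y [W [_ [Wy HW]]]. exact (HW y Wy).
Qed.

Lemma regular_open_semireg (R : set T) : regular_open tau R -> semireg tau R.
Proof. intros HR x Rx. exists R; auto. Qed.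

Lemma semireg_open (U : set T) : semireg tau U -> tau U.
Proof.
  destruct top as [_ [open_union _]]. intro HU.
  apply open_ext with
    (A := fun x => exists R, (regular_open tau R /\ forall y, R y -> U y) /\ R x).
  - intro x; split.
    + intros [R [[_ HRU] Rx]]. exact (HRU x Rx).
    + intro Ux. destruct (HU x Ux) as [R [HR [Rx HRU]]]. exists R; auto.
  - apply open_union. intros R [[HR _] _]; exact HR.
Qed.

Lemma theta_discrete_semireg (D : set T) :
  theta_discrete (semireg tau) D -> theta_discrete tau D.
Proof. apply theta_discrete_finer, semireg_open. Qed.

Lemma hausdorff_semireg : hausdorff tau -> hausdorff (semireg tau).
Proof.
  intros Hh x y Hxy. destruct (Hh x y Hxy) as [U [V [HU [HV [Ux [Vy UV]]]]]].
  exists (interior tau (closure tau U)), (interior tau (closure tau V)).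
  repeat split;
    try (apply regular_open_semireg, regular_open_interior_closure);
    try (apply open_sub_interior_closure; assumption).
  intros z [[W1 [HW1 [W1z clU]]] [W2 [HW2 [W2z clV]]]].
  destruct (clU z W1z W2 HW2 W2z) as [w [W2w Uw]].
  destruct (clV w W2w U HU Uw) as [v [Uv Vv]].
  exact (UV v (conj Uv Vv)).
Qed.

Section Homeomorphism.
Variables h g : T -> T.
Hypotheses (gh : forall x, g (h x) = x) (hg : forall y, h (g y) = y).
Hypotheses (h_cont : continuous tau h) (g_cont : continuous tau g).

Lemma closure_preimage (S : set T) (z : T) :
  closure tau (fun w => S (h w)) z <-> closure tau S (h z).
Proof.
  split.
  - intros Hc V HV Vhz.
    destruct (Hc _ (h_cont V HV) Vhz) as [w [Vhw Shw]]. exists (h w); auto.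
  - intros Hc V HV Vz.
    assert (Vghz : V (g (h z))) by (rewrite gh; exact Vz).
    destruct (Hc _ (g_cont V HV) Vghz) as [w [Vgw Sw]].
    exists (g w). rewrite hg; auto.
Qed.

Lemma interior_preimage (S : set T) (z : T) :
  interior tau (fun w => S (h w)) z <-> interior tau S (h z).
Proof.
  split.
  - intros [V [HV [Vz HVS]]]. exists (fun w => V (g w)).
    split; [exact (g_cont V HV)|]. split; [rewrite gh; exact Vz|].
    intros w Vgw. rewrite <- (hg w). exact (HVS _ Vgw).
  - intros [V [HV [Vhz HVS]]]. exists (fun w => V (h w)).
    split; [exact (h_cont V HV)|]. auto.
Qed.

Lemma regular_open_preimage (R : set T) :
  regular_open tau R -> regular_open tau (fun w => R (h w)).
Proof.
  intros [HR HRr]. split; [exact (h_cont R HR)|]. intro z.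
  rewrite HRr, <- interior_preimage.
  split; apply interior_mono; intros w; apply closure_preimage.
Qed.

Lemma continuous_semireg : continuous (semireg tau) h.
Proof.
  intros U HU x Uhx. destruct (HU (h x) Uhx) as [R [HR [Rhx HRU]]].
  exists (fun w => R (h w)). split; [apply regular_open_preimage; exact HR|]. auto.
Qed.
End Homeomorphism.

Lemma homeomorphism_semireg (h : T -> T) :
  homeomorphism tau h -> homeomorphism (semireg tau) h.
Proof.
  intros [g [gh [hg [h_cont g_cont]]]]. exists g.
  repeat split; auto; [apply continuous_semireg with g | apply continuous_semireg with h]; auto.
Qed.
End Topology.

Arguments hausdorff_semireg {T tau}.
Arguments theta_discrete_semireg {T tau} top {D}.
Arguments homeomorphism_semireg {T tau h}.

Theorem mainTheorem15 (T : Type) (tau : set T -> Prop) :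
  is_topology tau -> strongly_theta_DH tau -> strongly_theta_DH (semireg tau).
Proof.
  intros top [Hh Hs]. split; [exact (hausdorff_semireg top Hh)|].
  intros A B f HA HB Hf.
  destruct (Hs A B f (theta_discrete_semireg top HA) (theta_discrete_semireg top HB) Hf)
    as [h [Hhomeo Hext]].
  exists h. split; [exact (homeomorphism_semireg Hhomeo) | exact Hext].
Qed.
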